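(* Let $k\ge 2$ and let $\mathcal{T}_k$ be the graph with vertex set $\{a_1,\ldots,a_{k-1},b_1,\ldots,b_k,c_1,\ldots,c_{k-1},d_1,\ldots,d_{2k-3}\}$ whose edges are exactly: all pairs of distinct vertices in $\{a_1,\ldots,a_{k-1},b_1,\ldots,b_k\}$ (a clique $K_{2k-1}$); all pairs $b_ic_j$ ($1\le i\le k$, $1\le j\le k-1$); all pairs $c_id_j$ ($1\le i\le k-1$, $1\le j\le 2k-3$); the pairs $a_id_j$ for $1\le i\le k-1$ and $i\le j\le k-1$; and the pairs $b_id_j$ for $3\le i\le k$ and $k\le j\le k+i-3$. Then $\mathcal{T}_k$ is uniquely $k$-list colorable.
   Context: All graphs are finite, simple and undirected. A list assignment $L$ for a graph $G$ assigns to each vertex $v$ a set $L(v)$ of colors; an $L$-coloring is a proper vertex coloring $c$ of $G$ with $c(v)\in L(v)$ for every vertex $v$. A $k$-list assignment is a list assignment with $|L(v)|=k$ for all $v$. $G$ is uniquely $k$-list colorable (U$k$LC) if there exists a $k$-list assignment $L$ such that $G$ has exactly one $L$-coloring. *)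

From mathcomp Require Import all_boot.
Set Implicit Arguments. Unset Strict Implicit. Unset Printing Implicit Defensive.

(* A simple graph is given by a symmetric irreflexive relation adj on a finType V.
   Colors are natural numbers; a list L(v) is a duplicate-free sequence of colors. *)

Definition is_k_list_assignment (V : finType) (k : nat) (L : V -> seq nat) : Prop :=
  forall v, uniq (L v) /\ size (L v) = k.

Definition is_L_coloring (V : finType) (adj : rel V) (L : V -> seq nat) (c : V -> nat) : Prop :=
  (forall v, c v \in L v) /\ (forall u v, adj u v -> c u != c v).

Definition UkLC (V : finType) (adj : rel V) (k : nat) : Prop :=
  exists L : V -> seq nat,
    is_k_list_assignment k L /\
    exists c : V -> nat, is_L_coloring adj L c /\
      forall c' : V -> nat, is_L_coloring adj L c' -> forall v, c' v = c v.

(* vertices: a_1..a_{k-1}, b_1..b_k, c_1..c_{k-1}, d_1..d_{2k-3};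
   an ordinal i : 'I_n stands for the vertex with (1-based) index i+1 *)
Definition Tk_vert (k : nat) : finType :=
  ('I_(k.-1) + 'I_k + 'I_(k.-1) + 'I_(2 * k - 3))%type.

(* class (0 = a, 1 = b, 2 = c, 3 = d) and 1-based index *)
Definition Tk_info (k : nat) (x : Tk_vert k) : nat * nat :=
  match x with
  | inl (inl (inl i)) => (0, i.+1)
  | inl (inl (inr i)) => (1, i.+1)
  | inl (inr i) => (2, i.+1)
  | inr i => (3, i.+1)
  end.

(* directed description of the edge list in the paper *)
Definition Tk_edge0 (k : nat) (x y : nat * nat) : bool :=
  let: (cx, i) := x in let: (cy, j) := y in
  [|| (cx <= 1) && (cy <= 1)
    , (cx == 1) && (cy == 2)
    , (cx == 2) && (cy == 3)
    , [&& cx == 0, cy == 3, i <= j & j <= k - 1]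
    | [&& cx == 1, cy == 3, 3 <= i, k <= j & j <= k + i - 3]].

Definition Tk_adj (k : nat) : rel (Tk_vert k) :=
  fun u v => (u != v) && (Tk_edge0 k (Tk_info u) (Tk_info v) || Tk_edge0 k (Tk_info v) (Tk_info u)).

From mathcomp Require Import all_boot zify.
Set Implicit Arguments. Unset Strict Implicit. Unset Printing Implicit Defensive.
Arguments iota : simpl never.

(* The lists are chosen so that uniqueness propagates along the graph.  The
   clique a_1, ..., a_{k-1}, b_k shares the palette {0, ..., k-1}, so it uses
   all of it; every other b_i then has only its private colour left.  Each c_j
   has, besides a private colour, only the private colours of the b's, and each
   d_j, besides its target colour, only the private colours of the c's.
   Finally a_i is pinned to colour i-1 by induction on i: smaller colours are
   taken by earlier a's, and a larger colour j is taken by d_j, whose target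
   colour is j and which is adjacent to a_i since i <= j <= k-1. *)

Section ForcedColours.

Variables (V : eqType) (adj : rel V) (c : V -> nat).
Hypothesis c_proper : forall u v, adj u v -> c u != c v.

Lemma colour_forced v x (s : seq nat) :
  c v \in s -> {in s, forall y, y != x -> exists2 u, adj v u & c u = y} ->
  c v = x.
Proof.
move=> cv_s nbr; apply/eqP; apply/negPn/negP => cv_x.
have [u vu cu] := nbr _ cv_s cv_x.
by move: (c_proper vu); rewrite cu eqxx.
Qed.

Lemma clique_colours_onto (K : seq V) (s : seq nat) :
  uniq K -> {in K &, forall u v, u != v -> adj u v} ->
  {in K, forall u, c u \in s} -> size s <= size K -> {subset s <= map c K}.
Proof.
move=> uK cliqueK cK sizeKs.
have injK : {in K &, injective c}.
  move=> u v uK' vK' cuv; apply/eqP/negPn/negP => uv.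
  by move: (c_proper (cliqueK _ _ uK' vK' uv)); rewrite cuv eqxx.
have ucK : uniq (map c K) by rewrite map_inj_in_uniq.
have cK_s : {subset map c K <= s} by move=> _ /mapP[u uK' ->]; exact: cK.
have [|_ eq_cK_s] := uniq_min_size ucK cK_s; first by rewrite size_map.
by move=> y; rewrite eq_cK_s.
Qed.

End ForcedColours.

Section UniqueColouring.

Variable n : nat.
Local Notation k := n.+2.

Definition va (i : 'I_k.-1) : Tk_vert k := inl (inl (inl i)).
Definition vb (i : 'I_k) : Tk_vert k := inl (inl (inr i)).
Definition vc (i : 'I_k.-1) : Tk_vert k := inl (inr i).
Definition vd (i : 'I_(2 * k - 3)) : Tk_vert k := inr i.

(* Colours below k form the palette of the clique; k + i is private to b_{i+1}
   (i < k-1) and 2k - 1 + j to c_{j+1}; d_{j+1} targets the colour j + 1 of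
   a_{j+2} when j + 1 <= k - 1, and colour 0 otherwise. *)
Definition Tk_colour (x : Tk_vert k) : nat :=
  match x with
  | inl (inl (inl i)) => i
  | inl (inl (inr i)) => if i == k.-1 :> nat then k.-1 else k + i
  | inl (inr j) => k + k.-1 + j
  | inr j => if j < k.-1 then j.+1 else 0
  end.

Definition Tk_list (x : Tk_vert k) : seq nat :=
  match x with
  | inl (inl (inl _)) => iota 0 k
  | inl (inl (inr i)) =>
      if i == k.-1 :> nat then iota 0 k else Tk_colour x :: iota 0 k.-1
  | inl (inr _) => Tk_colour x :: iota k k.-1
  | inr _ => Tk_colour x :: iota (k + k.-1) k.-1
  end.

Lemma Tk_list_assignment : is_k_list_assignment k Tk_list.
Proof.
case=> [[[i|i]|i]|i] /=; repeat case: ifP => ?;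
  rewrite /= ?mem_iota ?iota_uniq ?size_iota ?andbT //; split => //; lia.
Qed.

Lemma Tk_colour_proper u v : Tk_adj u v -> Tk_colour u != Tk_colour v.
Proof.
move=> /andP[neq_uv uv].
case: u neq_uv uv => [[[i|i]|i]|i]; case: v => [[[j|j]|j]|j] => neq_uv uv;
  have := ltn_ord i; have := ltn_ord j; rewrite /= in uv *;
  try (have neq_ij : (i : nat) != j by apply: contraNneq neq_uv => /val_inj ->);
  rewrite ?subn1 /= in uv; repeat (case: ifP => /= [/eqP ?|?]);
  move=> *; try lia; exact: neq_ij.
Qed.

Lemma Tk_colour_is_colouring : is_L_coloring (@Tk_adj k) Tk_list Tk_colour.
Proof.
split; last exact: Tk_colour_proper.
case=> [[[i|i]|i]|i] /=.
- by rewrite mem_iota add0n (ltn_trans (ltn_ord i)).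
- by case: ifP => _; rewrite ?inE ?eqxx // mem_iota; lia.
- by rewrite inE eqxx.
- by rewrite inE eqxx.
Qed.

Lemma adj_aa (i j : 'I_k.-1) : i != j -> Tk_adj (va i) (va j).
Proof.
by move=> neq_ij; rewrite /Tk_adj /= andbT; apply: contra neq_ij => /eqP[->].
Qed.

Lemma adj_bb (i j : 'I_k) : i != j -> Tk_adj (vb i) (vb j).
Proof.
by move=> neq_ij; rewrite /Tk_adj /= andbT; apply: contra neq_ij => /eqP[->].
Qed.

Lemma adj_ab (i : 'I_k.-1) (j : 'I_k) : Tk_adj (va i) (vb j) /\ Tk_adj (vb j) (va i).
Proof. by []. Qed.

Lemma adj_cb (j : 'I_k.-1) (i : 'I_k) : Tk_adj (vc j) (vb i).
Proof. by []. Qed.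

Lemma adj_dc j (i : 'I_k.-1) : Tk_adj (vd j) (vc i).
Proof. by []. Qed.

Lemma adj_ad (i : 'I_k.-1) (j : 'I_(2 * k - 3)) :
  i <= j < k.-1 -> Tk_adj (va i) (vd j).
Proof. by move=> ij; rewrite /Tk_adj /= subn1 /= !orbF. Qed.

Variable c : Tk_vert k -> nat.
Hypothesis c_in : forall v, c v \in Tk_list v.
Hypothesis c_proper : forall u v, Tk_adj u v -> c u != c v.

Definition Tk_clique : seq (Tk_vert k) := vb ord_max :: map va (enum 'I_k.-1).

Lemma clique_palette_used : {subset iota 0 k <= map c Tk_clique}.
Proof.
apply: (clique_colours_onto c_proper).
- rewrite /= map_inj_uniq ?enum_uniq; last by move=> i j [].
  by rewrite andbT; apply/mapP => -[].
- move=> u v; rewrite !inE.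
  move=> /predU1P[-> | /mapP[i _ ->]] /predU1P[-> | /mapP[j _ ->]];
    rewrite ?eqxx // => neq_uv; try by case: (adj_ab i ord_max).
  by apply: adj_aa; apply: contra neq_uv => /eqP ->.
- move=> u; rewrite inE => /predU1P[-> | /mapP[i _ ->]]; last exact: c_in (va i).
  by have := c_in (vb ord_max); rewrite /= eqxx.
- by rewrite size_iota /= size_map size_enum_ord.
Qed.

Lemma c_vb (i : 'I_k) : (i : nat) != k.-1 -> c (vb i) = Tk_colour (vb i).
Proof.
move=> i_lt; apply: (colour_forced c_proper (c_in (vb i))).
rewrite /= (negbTE i_lt) => y; rewrite inE => /predU1P[-> /eqP //| y_pal _].
have /mapP[u u_cl ->] : y \in map c Tk_clique.
  by apply: clique_palette_used; move: y_pal; rewrite !mem_iota; lia.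
exists u => //; move: u_cl; rewrite inE => /predU1P[-> | /mapP[j _ ->]].
  by apply: adj_bb; apply: contra i_lt => /eqP ->.
by case: (adj_ab j i).
Qed.

Lemma c_vc j : c (vc j) = Tk_colour (vc j).
Proof.
apply: (colour_forced c_proper (c_in (vc j))) => y.
rewrite inE => /predU1P[-> /eqP //| ]; rewrite mem_iota => y_range _.
pose i : 'I_k := inord (y - k).
have i_val : (i : nat) = y - k by rewrite inordK; lia.
have i_lt : (i : nat) != k.-1 by rewrite i_val; lia.
by exists (vb i); [exact: adj_cb | rewrite c_vb //= (negbTE i_lt) i_val; lia].
Qed.

Lemma c_vd j : c (vd j) = Tk_colour (vd j).
Proof.
apply: (colour_forced c_proper (c_in (vd j))) => y.
rewrite inE => /predU1P[-> /eqP //| ]; rewrite mem_iota => y_range _.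
pose i : 'I_k.-1 := inord (y - (k + k.-1)).
have i_val : (i : nat) = y - (k + k.-1) by rewrite inordK; lia.
by exists (vc i); [exact: adj_dc | rewrite c_vc /= i_val; lia].
Qed.

Lemma c_va (i : 'I_k.-1) : c (va i) = i.
Proof.
case: i => i; elim/ltn_ind: i => i IH i_lt.
apply: (colour_forced c_proper (c_in (va _))) => y; rewrite mem_iota /= => y_lt neq_yi.
case: (ltngtP y i) => [y_i | i_y | /eqP]; last by rewrite (negbTE neq_yi).
- have y_lt' : y < k.-1 by lia.
  exists (va (Ordinal y_lt')); last exact: IH.
  by apply: adj_aa; rewrite -val_eqE /= eq_sym neq_ltn y_i.
- have j_lt : y.-1 < 2 * k - 3 by lia.
  exists (vd (Ordinal j_lt)); first by apply: adj_ad => /=; lia.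
  by rewrite c_vd /=; case: ifP; lia.
Qed.

Lemma c_vb_last : c (vb ord_max) = k.-1.
Proof.
apply: (colour_forced c_proper (c_in (vb ord_max))) => y.
rewrite /= eqxx mem_iota => y_lt neq_y.
have y_lt' : y < k.-1 by lia.
by exists (va (Ordinal y_lt')); [case: (adj_ab (Ordinal y_lt') ord_max) | exact: c_va].
Qed.

Lemma Tk_colouring_unique v : c v = Tk_colour v.
Proof.
case: v => [[[i|i]|j]|j]; [exact: c_va | | exact: c_vc | exact: c_vd].
have [i_last | i_lt] := eqVneq (i : nat) k.-1; last exact: c_vb.
have -> : i = ord_max by apply: val_inj.
by rewrite c_vb_last /= eqxx.
Qed.

End UniqueColouring.

Theorem mainTheorem19 (k : nat) : 2 <= k -> UkLC (@Tk_adj k) k.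
Proof.
case: k => [|[|n]] // _.
exists (@Tk_list n); split; first exact: Tk_list_assignment.
exists (@Tk_colour n); split; first exact: Tk_colour_is_colouring.
by move=> c [c_in c_proper] v; exact: Tk_colouring_unique.
Qed.
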